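(* For every integer $d\ge 2$ and every $\theta>0$, in the snowdrift game described in the context, $F$ is strictly decreasing in $\sigma_c^2$, strictly decreasing in $\sigma_b^2$, and strictly increasing in $\sigma_{bc}$ (each time with the remaining parameters held fixed).
   Context: For integers $0\le k\le n$ and $\theta>0$ let $\psi_n^k=\frac{\prod_{i=1}^{k}(\theta+i-1)\prod_{j=1}^{n-k}(\theta+j-1)}{\prod_{l=1}^{n}(2\theta+l-1)}$ (empty products equal $1$). For real arrays $\mu_{C,k},\mu_{D,k},\sigma_{CC,kl},\sigma_{CD,kl},\sigma_{DD,kl}$ ($k,l=0,\ldots,d-1$) define $$F=\sum_{k=0}^{d-1}\binom{d-1}{k}\psi_{d+1}^{k+1}(\mu_{C,k}-\mu_{D,k})+\sum_{k,l=0}^{d-1}\binom{d-1}{k}\binom{d-1}{l}\Big[-\psi_{2d+1}^{k+l+2}(\sigma_{CC,kl}-\sigma_{CD,kl})+\psi_{2d+1}^{k+l+1}(\sigma_{DD,kl}-\sigma_{CD,kl})\Big].$$ These arrays are the scaled means and second moments of the payoffs $a_k$ (cooperator) and $b_k$ (defector) with $k$ cooperating partners in a group of size $d$. In the paper's large-population weak-selection approximation, the average abundance of $C$ is $\tfrac12+\tfrac{\delta(1-u)}{u}F$; increasing $F$ means increasing the average abundance of $C$. Snowdrift game: random benefit $b$ and cost $c$ have scaled moments $\mu_b,\mu_c,\sigma_b^2,\sigma_c^2,\sigma_{bc}$ (i.e. $E[b]=\mu_b\delta+o(\delta)$, etc., with $E[bc]=\sigma_{bc}\delta+o(\delta)$).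 The payoffs are $a_k=b-\frac{c}{k+1}$ for $k=0,\ldots,d-1$, $b_0=0$, and $b_k=b$ for $k\ge1$. Hence $\mu_{C,k}=\mu_b-\frac{\mu_c}{k+1}$, $\mu_{D,k}=\mu_b\mathbf 1_{\{k\ne0\}}$, $\sigma_{CC,kl}=\sigma_b^2-\big(\frac1{k+1}+\frac1{l+1}\big)\sigma_{bc}+\frac{\sigma_c^2}{(k+1)(l+1)}$, $\sigma_{DD,kl}=\sigma_b^2\mathbf 1_{\{k\ne0,\,l\ne0\}}$, $\sigma_{CD,kl}=\big(\sigma_b^2-\frac{\sigma_{bc}}{k+1}\big)\mathbf 1_{\{l\ne0\}}$. *)

From mathcomp Require Import all_boot all_order all_algebra.
Set Implicit Arguments. Unset Strict Implicit. Unset Printing Implicit Defensive.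
Import Order.TTheory GRing.Theory Num.Theory.
Local Open Scope ring_scope.

Definition psi {R : realFieldType} (th : R) (n k : nat) : R :=
  (\prod_(1 <= i < k.+1) (th + i%:R - 1)) *
  (\prod_(1 <= j < (n - k).+1) (th + j%:R - 1)) /
  (\prod_(1 <= l < n.+1) (2 * th + l%:R - 1)).

Definition Fgen {R : realFieldType} (th : R) (d : nat)
  (muC muD : nat -> R) (sCC sCD sDD : nat -> nat -> R) : R :=
  \sum_(0 <= k < d) 'C(d.-1, k)%:R * psi th d.+1 k.+1 * (muC k - muD k)
  + \sum_(0 <= k < d) \sum_(0 <= l < d) 'C(d.-1, k)%:R * 'C(d.-1, l)%:R *
      (- psi th (2 * d).+1 (k + l + 2) * (sCC k l - sCD k l)
       + psi th (2 * d).+1 (k + l + 1) * (sDD k l - sCD k l)).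

Definition sd_muC {R : realFieldType} (mub muc : R) (k : nat) : R :=
  mub - muc / (k.+1)%:R.
Definition sd_muD {R : realFieldType} (mub : R) (k : nat) : R :=
  if k != 0%N then mub else 0.
Definition sd_sCC {R : realFieldType} (sb2 sc2 sbc : R) (k l : nat) : R :=
  sb2 - ((k.+1)%:R^-1 + (l.+1)%:R^-1) * sbc + sc2 / ((k.+1)%:R * (l.+1)%:R).
Definition sd_sDD {R : realFieldType} (sb2 : R) (k l : nat) : R :=
  if (k != 0%N) && (l != 0%N) then sb2 else 0.
Definition sd_sCD {R : realFieldType} (sb2 sbc : R) (k l : nat) : R :=
  if l != 0%N then sb2 - sbc / (k.+1)%:R else 0.

Definition F_snowdrift {R : realFieldType} (th : R) (d : nat)
  (mub muc sb2 sc2 sbc : R) : R :=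
  Fgen th d (sd_muC mub muc) (sd_muD mub)
    (sd_sCC sb2 sc2 sbc) (sd_sCD sb2 sbc) (sd_sDD sb2).

From mathcomp Require Import all_boot all_order all_algebra.
From mathcomp Require Import ring lra.
Import Order.TTheory GRing.Theory Num.Theory.
Local Open Scope ring_scope.

(* Only the second-moment part of F depends on sigma_b^2, sigma_c^2 and
   sigma_bc, and each of its summands is affine in each of them, with a slope
   that is an explicit combination of psi-values.  As psi > 0 for th > 0, the
   slopes have a fixed sign: negative for sigma_c^2, nonpositive (and negative
   at k = l = 0) for sigma_b^2, positive for sigma_bc.  The binomial weights
   are nonnegative and equal to 1 at k = l = 0, so the strict inequality at
   that summand survives the summation. *)

Lemma ltr_sum_nat_head (R : numDomainType) (m n : nat) (F G : nat -> R) :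
  (m < n)%N -> (forall i, (m <= i < n)%N -> F i <= G i) -> F m < G m ->
  \sum_(m <= i < n) F i < \sum_(m <= i < n) G i.
Proof.
move=> lt_mn le_FG lt_FGm; rewrite big_ltn // [ltRHS]big_ltn //.
apply: ltr_leD => //; apply: ler_sum_nat => i /andP[/ltnW le_mi lt_in].
by apply: le_FG; rewrite le_mi lt_in.
Qed.

Lemma prod_shift_gt0 (R : realFieldType) (c : R) (m : nat) :
  0 < c -> 0 < \prod_(1 <= i < m) (c + i%:R - 1).
Proof.
move=> c_gt0; rewrite big_seq; apply: prodr_gt0 => i.
rewrite mem_index_iota => /andP[i_ge1 _].
have : (1 : R) <= i%:R by rewrite ler1n.
lra.
Qed.

Lemma psi_gt0 (R : realFieldType) (th : R) (n k : nat) : 0 < th -> 0 < psi th n k.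
Proof.
by move=> th_gt0; rewrite /psi divr_gt0 ?mulr_gt0 ?prod_shift_gt0 // mulr_gt0.
Qed.

Definition sigma_summand {R : realFieldType} (th : R) (d : nat)
  (sCC sCD sDD : nat -> nat -> R) (k l : nat) : R :=
  - psi th (2 * d).+1 (k + l + 2) * (sCC k l - sCD k l)
  + psi th (2 * d).+1 (k + l + 1) * (sDD k l - sCD k l).

Lemma Fgen_lt_sigma (R : realFieldType) (th : R) (d : nat) (muC muD : nat -> R)
    (sCC sCD sDD sCC' sCD' sDD' : nat -> nat -> R) :
  (0 < d)%N ->
  (forall k l, sigma_summand th d sCC sCD sDD k l <= sigma_summand th d sCC' sCD' sDD' k l) ->
  sigma_summand th d sCC sCD sDD 0 0 < sigma_summand th d sCC' sCD' sDD' 0 0 ->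
  Fgen th d muC muD sCC sCD sDD < Fgen th d muC muD sCC' sCD' sDD'.
Proof.
move=> d_gt0 le_s lt_s00; rewrite /Fgen ltrD2l.
have le_w k l : 'C(d.-1, k)%:R * 'C(d.-1, l)%:R * sigma_summand th d sCC sCD sDD k l
    <= 'C(d.-1, k)%:R * 'C(d.-1, l)%:R * sigma_summand th d sCC' sCD' sDD' k l.
  by rewrite ler_wpM2l ?mulr_ge0.
apply: ltr_sum_nat_head => // [k _|]; first by apply: ler_sum_nat.
by apply: ltr_sum_nat_head => //; rewrite bin0 !mul1r.
Qed.

Section SnowdriftSummand.

Variables (R : realFieldType) (th : R) (d : nat).

Definition sd_summand (sb2 sc2 sbc : R) (k l : nat) : R :=
  sigma_summand th d (sd_sCC sb2 sc2 sbc) (sd_sCD sb2 sbc) (sd_sDD sb2) k l.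

Local Notation p2 k l := (psi th (2 * d).+1 (k + l + 2)).
Local Notation p1 k l := (psi th (2 * d).+1 (k + l + 1)).

Lemma sd_summand_sc2 sb2 sbc x y k l :
  sd_summand sb2 y sbc k l - sd_summand sb2 x sbc k l
  = (x - y) * (p2 k l / ((k.+1)%:R * (l.+1)%:R)).
Proof.
rewrite /sd_summand /sigma_summand /sd_sCC /sd_sCD /sd_sDD.
by case: l => [|l]; case: k => [|k] /=; ring.
Qed.

Lemma sd_summand_sb2 sc2 sbc x y k l :
  sd_summand y sc2 sbc k l - sd_summand x sc2 sbc k l
  = (x - y) * (if l == 0%N then p2 k l else if k == 0%N then p1 k l else 0).
Proof.
rewrite /sd_summand /sigma_summand /sd_sCC /sd_sCD /sd_sDD.
by case: l => [|l]; case: k => [|k] /=; ring.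
Qed.

Lemma sd_summand_sbc sb2 sc2 x y k l :
  sd_summand sb2 sc2 y k l - sd_summand sb2 sc2 x k l
  = (y - x) * (if l == 0%N then p2 k l * ((k.+1)%:R^-1 + (l.+1)%:R^-1)
               else p2 k l * (l.+1)%:R^-1 + p1 k l * (k.+1)%:R^-1).
Proof.
rewrite /sd_summand /sigma_summand /sd_sCC /sd_sCD /sd_sDD.
by case: l => [|l]; case: k => [|k] /=; ring.
Qed.

Hypothesis th_gt0 : 0 < th.

Lemma sd_summand_sc2_lt sb2 sbc x y k l :
  x < y -> sd_summand sb2 y sbc k l < sd_summand sb2 x sbc k l.
Proof.
move=> lt_xy; rewrite -subr_lt0 sd_summand_sc2 pmulr_llt0 ?subr_lt0 //.
by rewrite divr_gt0 ?psi_gt0 // mulr_gt0 ?ltr0n.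
Qed.

Lemma sd_summand_sb2_le sc2 sbc x y k l :
  x <= y -> sd_summand y sc2 sbc k l <= sd_summand x sc2 sbc k l.
Proof.
move=> le_xy; rewrite -subr_le0 sd_summand_sb2 mulr_le0_ge0 ?subr_le0 //.
by case: ifP => _; [|case: ifP => _]; rewrite // ltW ?psi_gt0.
Qed.

Lemma sd_summand_sb2_lt00 sc2 sbc x y :
  x < y -> sd_summand y sc2 sbc 0 0 < sd_summand x sc2 sbc 0 0.
Proof.
by move=> lt_xy; rewrite -subr_lt0 sd_summand_sb2 /= pmulr_llt0 ?subr_lt0 ?psi_gt0.
Qed.

Lemma sd_summand_sbc_lt sb2 sc2 x y k l :
  x < y -> sd_summand sb2 sc2 x k l < sd_summand sb2 sc2 y k l.
Proof.
move=> lt_xy; rewrite -subr_gt0 sd_summand_sbc pmulr_lgt0 ?subr_gt0 //.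
have inv_gt0 n : 0 < (n.+1)%:R^-1 :> R by rewrite invr_gt0 ltr0n.
case: ifP => _; first by rewrite mulr_gt0 ?psi_gt0 // addr_gt0.
by rewrite addr_gt0 // mulr_gt0 ?psi_gt0.
Qed.

End SnowdriftSummand.

Theorem mainTheorem6 (R : realFieldType) (d : nat) (th : R) :
  (2 <= d)%N -> 0 < th ->
  (* strictly decreasing in sigma_c^2 *)
  (forall mub muc sb2 sbc x y : R, x < y ->
     F_snowdrift th d mub muc sb2 y sbc < F_snowdrift th d mub muc sb2 x sbc) /\
  (* strictly decreasing in sigma_b^2 *)
  (forall mub muc sc2 sbc x y : R, x < y ->
     F_snowdrift th d mub muc y sc2 sbc < F_snowdrift th d mub muc x sc2 sbc) /\
  (* strictly increasing in sigma_bc *)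
  (forall mub muc sb2 sc2 x y : R, x < y ->
     F_snowdrift th d mub muc sb2 sc2 x < F_snowdrift th d mub muc sb2 sc2 y).
Proof.
move=> d_ge2 th_gt0; have d_gt0 : (0 < d)%N by apply: leq_trans d_ge2.
split; [|split] => mub muc s1 s2 x y lt_xy; apply: Fgen_lt_sigma => // [k l|].
- exact/ltW/sd_summand_sc2_lt.
- exact: sd_summand_sc2_lt.
- exact/sd_summand_sb2_le/ltW.
- exact: sd_summand_sb2_lt00.
- exact/ltW/sd_summand_sbc_lt.
- exact: sd_summand_sbc_lt.
Qed.
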